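(* Let $M\in\mathrm{M}_n(\mathbb{K})$ be a cyclic matrix with minimal polynomial $f=f_1^{m_1}\cdots f_s^{m_s}$, where $f_1,\dots,f_s\in\mathbb{K}[x]$ are pairwise distinct monic irreducible polynomials and $m_i\ge1$. Let $g\in\mathbb{L}[x]$ be a monic divisor of $f$, written $g=g_1\cdots g_s$ with $g_i\mid f_i^{m_i}$ in $\mathbb{L}[x]$. For each $i$ let $\ell_i=0$ if $g_i=1$, and $\ell_i=\min\{\ell\in\{1,\dots,m_i\} : g_i\mid f_i^{\ell}\}$ if $g_i\neq1$. Let $d=n-\sum_i\ell_i\deg f_i$ and let $v\in\mathbb{K}^n$ be a cyclic vector for $M$. Then: (1) $g\,\mathbb{L}[x]\cap\mathbb{K}[x]=\big(\prod_{i=1}^sf_i^{\ell_i}\big)\mathbb{K}[x]$; (2) the map $Q\in\mathbb{K}[x]_{<d}\mapsto v\,\big(\prod_i f_i^{\ell_i}\big)(M)^tQ(M)^t$ is a $\mathbb{K}$-linear isomorphism onto $\mathcal{C}_g\cap\mathbb{K}^n$; in particular $\dim_{\mathbb{K}}(\mathcal{C}_g\cap\mathbb{K}^n)=\sum_{i=1}^s(m_i-\ell_i)\deg f_i$; (3) if $\mathcal{C}_g\neq\{0\}$, then $M_1(\mathcal{C}_g)=1$ if and only if there exists $i$ with $\ell_i\le m_i-1$, i.e. with $g_i\mid f_i^{m_i-1}$.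
   Context: Let $\mathbb{L}/\mathbb{K}$ be a field extension of finite degree $m\ge n$. Vectors are row vectors; $\mathbb{F}[x]_{<d}$ denotes polynomials of degree $<d$. For $c=(c_1,\dots,c_n)\in\mathbb{L}^n$, $\mathrm{wt}_R(c)=\dim_{\mathbb{K}}\mathrm{Span}_{\mathbb{K}}(c_1,\dots,c_n)$, and for a nonzero linear code $\mathcal{C}\subseteq\mathbb{L}^n$, $M_1(\mathcal{C})=\min\{\mathrm{wt}_R(c):0\neq c\in\mathcal{C}\}$ (the first generalized rank weight). A matrix $M\in\mathrm{M}_n(\mathbb{K})$ is cyclic if there is $v\in\mathbb{K}^n$ (a cyclic vector) with $(v,vM^t,\dots,v(M^t)^{n-1})$ a basis; equivalently its minimal polynomial $f$ has degree $n$. For a monic divisor $g$ of $f$ in $\mathbb{L}[x]$, $\mathcal{C}_g=\{v\,g(M)^tP(M)^t : P\in\mathbb{L}[x]\}\subseteq\mathbb{L}^n$ (independent of the cyclic vector $v\in\mathbb{K}^n$, of dimension $n-\deg g$); every $\mathbb{L}$-subspace of $\mathbb{L}^n$ stable under $c\mapsto cM^t$ (an $M$-cyclic code) is $\mathcal{C}_g$ for a unique $g$, called its generator polynomial. *)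

From HB Require Import structures.
From mathcomp Require Import all_boot all_order all_algebra all_field.
Set Implicit Arguments. Unset Strict Implicit. Unset Printing Implicit Defensive.
Import GRing.Theory.
Local Open Scope ring_scope.

Section Defs.
Variables (K : fieldType) (L : fieldExtType K).

Definition lift_mx p q (A : 'M[K]_(p, q)) : 'M[L]_(p, q) := map_mx (in_alg L) A.
Definition lift_poly (p : {poly K}) : {poly L} := map_poly (in_alg L) p.

Definition krylov_mx n (M : 'M[K]_n) (v : 'rV[K]_n) : 'M[K]_n :=
  \matrix_(k < n) (v *m (M^T) ^+ k).
Definition cyclic_vector n (M : 'M[K]_n) (v : 'rV[K]_n) : bool :=
  row_free (krylov_mx M v) && row_full (krylov_mx M v).

Definition cyclic_code n (M : 'M[K]_n.+1) (v : 'rV[K]_n.+1) (g : {poly L})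
  : 'rV[L]_n.+1 -> Prop :=
  fun c => exists P : {poly L},
    c = lift_mx v *m (horner_mx (lift_mx M) g)^T *m (horner_mx (lift_mx M) P)^T.

Definition rank_weight n (c : 'rV[L]_n) : nat :=
  \dim (<< [seq c ord0 j | j <- enum 'I_n] >>)%VS.

Definition is_M1 n (C : 'rV[L]_n -> Prop) (k : nat) : Prop :=
  (exists c, [/\ C c, c != 0 & rank_weight c = k]) /\
  (forall c, C c -> c != 0 -> (k <= rank_weight c)%N).

Definition is_ell (gi : {poly L}) (fi : {poly K}) (mi l : nat) : Prop :=
  if gi == 1 then l = 0%N
  else [/\ (1 <= l <= mi)%N, gi %| lift_poly (fi ^+ l)
         & forall l', (1 <= l' < l)%N -> ~~ (gi %| lift_poly (fi ^+ l'))].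
End Defs.

From HB Require Import structures.
From mathcomp Require Import all_boot all_order all_algebra all_field.
From mathcomp Require Import zify.
Import GRing.Theory.
Local Open Scope ring_scope.
Set Implicit Arguments. Unset Strict Implicit.

(* Since v is cyclic, p |-> v p(M)^t identifies K[x]/(f) with K^n, and likewise
   over L, where C_g becomes the ideal generated by g.  A vector over K thus lies
   in C_g iff it is v p(M)^t with g | p in L[x], i.e. (by (1)) with F | p in K[x]
   for F = prod f_i^l_i; so C_g /\ K^n is the image of the multiples F Q, deg Q < d.
   For (1): if g_i | p and f_i^j exactly divides p, then p / f_i^j is coprime to
   f_i^m_i, hence to g_i over L, so g_i | f_i^j and l_i <= j by minimality.
   For (3): a codeword of rank weight one is an L-multiple of a vector over K, and
   C_g is L-linear, so M_1(C_g) = 1 iff C_g /\ K^n <> 0 iff d > 0. *)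

Lemma trmxX (R : comPzRingType) n (A : 'M[R]_n.+1) k : (A ^+ k)^T = A^T ^+ k.
Proof.
elim: k => [|k IHk]; first by rewrite !expr0 trmx1.
by rewrite exprS exprSr -IHk -!mulmxE trmx_mul.
Qed.

Section CyclicVector.
Variables (R : fieldType) (n : nat) (A : 'M[R]_n.+1) (u : 'rV[R]_n.+1).

Definition horner_row (p : {poly R}) : 'rV[R]_n.+1 := u *m (horner_mx A p)^T.

Lemma horner_row_is_linear : linear horner_row.
Proof. by move=> a p q; rewrite /horner_row !linearP. Qed.

HB.instance Definition _ :=
  GRing.isLinear.Build R {poly R} 'rV[R]_n.+1 _ horner_row horner_row_is_linear.

Lemma horner_rowM p q : horner_row (p * q) = horner_row p *m (horner_mx A q)^T.
Proof. by rewrite /horner_row mulrC rmorphM trmx_mul mulmxA. Qed.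

Lemma horner_rowXn k : horner_row 'X^k = u *m A^T ^+ k.
Proof. by rewrite /horner_row rmorphXn /= horner_mx_X trmxX. Qed.

Lemma horner_row_rVpoly (r : 'rV_n.+1) : horner_row (rVpoly r) = r *m krylov_mx A u.
Proof.
rewrite mulmx_sum_row [rVpoly r]poly_def linear_sum; apply: eq_bigr => i _.
by rewrite linearZ /= valK horner_rowXn rowK.
Qed.

Hypothesis cycu : cyclic_vector A u.

Lemma horner_row_surj (w : 'rV[R]_n.+1) :
  exists2 p : {poly R}, (size p <= n.+1)%N & w = horner_row p.
Proof.
have /submxP[r ->] : (w <= krylov_mx A u)%MS by apply/submx_full/(andP cycu).2.
by exists (rVpoly r); rewrite ?size_poly ?horner_row_rVpoly.
Qed.

Lemma horner_row_eq0_small (p : {poly R}) : (size p <= n.+1)%N -> horner_row p = 0 -> p = 0.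
Proof.
move=> sp; rewrite -(poly_rV_K sp) horner_row_rVpoly -(mul0mx _ (krylov_mx A u)).
by move/(row_free_inj (andP cycu).1) ->; rewrite linear0.
Qed.

Lemma degree_mxminpoly_cyclic : degree_mxminpoly A = n.+1.
Proof.
have mp_neq0 := monic_neq0 (mxminpoly_monic A).
have mp_le : (size (mxminpoly A) <= n.+2)%N.
  by rewrite -(size_char_poly A) dvdp_leq ?monic_neq0 ?char_poly_monic ?mxminpoly_dvd_char.
have mp_gt : (n.+1 < size (mxminpoly A))%N.
  rewrite ltnNge; apply: contra mp_neq0 => small; apply/eqP/horner_row_eq0_small => //.
  by rewrite /horner_row mx_root_minpoly trmx0 mulmx0.
by apply/eqP; rewrite -eqSS -size_mxminpoly eqn_leq mp_le.
Qed.

Lemma horner_row_eq0 (p : {poly R}) : (horner_row p == 0) = (mxminpoly A %| p).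
Proof.
apply/eqP/idP => [|/mxminpoly_minP Ap0]; last by rewrite /horner_row Ap0 trmx0 mulmx0.
rewrite {1}(divp_eq p (mxminpoly A)) linearD /= horner_rowM mx_root_minpoly trmx0.
rewrite mulmx0 add0r => /horner_row_eq0_small p_mod0; apply/modp_eq0P/p_mod0.
by rewrite -degree_mxminpoly_cyclic size_mod_mxminpoly.
Qed.

End CyclicVector.

Section PolyArith.
Variable R : idomainType.

Lemma dvdp_prod2 (I : Type) (r : seq I) (a b : I -> {poly R}) :
  (forall i, a i %| b i) -> \prod_(i <- r) a i %| \prod_(i <- r) b i.
Proof. by move=> ab; elim/big_rec2: _ => // i p q _; apply: dvdp_mul. Qed.

Lemma dvdp_prod_coprime (I : eqType) (r : seq I) (a : I -> {poly R}) p :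
    uniq r -> {in r &, forall i j, i != j -> coprimep (a i) (a j)} ->
  {in r, forall i, a i %| p} -> \prod_(i <- r) a i %| p.
Proof.
elim: r => [|x r IHr] /=; first by rewrite big_nil dvd1p.
case/andP=> xr ur cop dvd; rewrite big_cons Gauss_dvdp.
  rewrite dvd ?mem_head ?IHr // => [i j ir jr|i ir].
    by apply: cop; rewrite inE ?ir ?jr orbT.
  by apply: dvd; rewrite inE ir orbT.
rewrite big_seq; elim/big_rec: _ => [|i q ir copq]; first exact: coprimep1.
rewrite coprimepMr copq andbT cop ?mem_head ?inE ?ir ?orbT //.
by apply: contraNneq xr => ->.
Qed.

Lemma size_prod_pred (I : Type) (r : seq I) (a : I -> {poly R}) :
    (forall i, a i != 0) ->
  (size (\prod_(i <- r) a i)).-1 = (\sum_(i <- r) (size (a i)).-1)%N.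
Proof.
move=> a0; elim: r => [|x r IHr]; first by rewrite !big_nil size_poly1.
have Pr0 : \prod_(i <- r) a i != 0.
  by elim/big_rec: _ => [|i q _ q0]; rewrite ?oner_neq0 ?mulf_neq0 ?a0.
rewrite !big_cons -IHr size_mul ?a0 // (polySpred (a0 x)) (polySpred Pr0).
by rewrite addnS.
Qed.

Lemma size_prod_exp_pred (I : finType) (a : I -> {poly R}) (k : I -> nat) :
    (forall i, a i != 0) ->
  (size (\prod_i a i ^+ k i)).-1 = (\sum_i k i * (size (a i)).-1)%N.
Proof.
move=> a0; rewrite size_prod_pred => [|i]; last exact: expf_neq0.
by apply: eq_bigr => i _; rewrite size_exp mulnC.
Qed.

End PolyArith.

Section Irreducible.
Variable R : fieldType.
Implicit Types f q : {poly R}.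

Lemma irredp_coprimep f q : irreducible_poly f -> ~~ (f %| q) -> coprimep f q.
Proof.
move=> f_irr; have [gcd1|gcd_f] := irredp_XsubCP f_irr (dvdp_gcdl f q).
  by rewrite /coprimep size_poly_eq1.
by rewrite -(eqp_dvdl q gcd_f) dvdp_gcdr.
Qed.

Lemma coprimep_irredp_monic f1 f2 :
    f1 \is monic -> f2 \is monic -> irreducible_poly f1 -> irreducible_poly f2 ->
  f1 != f2 -> coprimep f1 f2.
Proof.
move=> f1_monic f2_monic f1_irr f2_irr ne12.
apply: irredp_coprimep => //; apply: contra ne12 => f1_dvd.
have [|] := irredp_XsubCP f2_irr f1_dvd; last by rewrite eqp_monic.
by rewrite -size_poly_eq1 gtn_eqF // f1_irr.1.
Qed.

End Irreducible.

Section Lift.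
Variables (K : fieldType) (L : fieldExtType K).

Lemma lift_horner_row n (M : 'M[K]_n.+1) (v : 'rV[K]_n.+1) p :
  lift_mx L (horner_row M v p) = horner_row (lift_mx L M) (lift_mx L v) (lift_poly L p).
Proof. by rewrite /horner_row /lift_mx /lift_poly map_mxM -map_horner_mx map_trmx. Qed.

Lemma lift_krylov_mx n (M : 'M[K]_n.+1) (v : 'rV[K]_n.+1) :
  krylov_mx (lift_mx L M) (lift_mx L v) = lift_mx L (krylov_mx M v).
Proof.
apply/row_matrixP => i; rewrite rowK /lift_mx -map_row rowK -!horner_rowXn.
by have := lift_horner_row M v 'X^i; rewrite /lift_mx /lift_poly map_polyXn => ->.
Qed.

Lemma cyclic_vector_lift n (M : 'M[K]_n.+1) (v : 'rV[K]_n.+1) :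
  cyclic_vector M v -> cyclic_vector (lift_mx L M) (lift_mx L v).
Proof. by rewrite /cyclic_vector lift_krylov_mx /lift_mx row_free_map row_full_map. Qed.

Lemma cyclic_codeE n (M : 'M[K]_n.+1) (v : 'rV[K]_n.+1) (g : {poly L}) c :
  cyclic_code M v g c <-> exists P, c = horner_row (lift_mx L M) (lift_mx L v) (g * P).
Proof. by split=> -[P cP]; exists P; rewrite cP horner_rowM. Qed.

Lemma cyclic_codeZ n (M : 'M[K]_n.+1) (v : 'rV[K]_n.+1) (g : {poly L}) x c :
  cyclic_code M v g c -> cyclic_code M v g (x *: c).
Proof.
by move=> /cyclic_codeE[P ->]; apply/cyclic_codeE; exists (x *: P); rewrite -scalerAr linearZ.
Qed.

Lemma dvdp_lift_irr_exp (f : {poly K}) (h : {poly L}) m j p :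
    irreducible_poly f -> h %| lift_poly L (f ^+ m) -> h %| lift_poly L p ->
  f ^+ j %| p -> ~~ (f ^+ j.+1 %| p) -> h %| lift_poly L (f ^+ j).
Proof.
move=> f_irr h_fm h_p fj_p fj1_p; set q := p %/ f ^+ j.
have pE : p = q * f ^+ j by rewrite divpK.
have f_q : ~~ (f %| q).
  by apply: contra fj1_p => f_q; rewrite pE exprSr mulrC dvdp_mul.
have cop_hq : coprimep h (lift_poly L q).
  rewrite coprimep_sym; apply: coprimep_dvdl h_fm _.
  rewrite /lift_poly coprimep_map coprimep_sym.
  exact/coprimep_expl/irredp_coprimep.
by rewrite -(Gauss_dvdpr _ cop_hq) /lift_poly -rmorphM -pE.
Qed.

Lemma is_ell_leq (h : {poly L}) (f : {poly K}) m l : is_ell h f m l -> (l <= m)%N.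
Proof. by rewrite /is_ell; case: ifP => [_ ->|_ [/andP[]]]. Qed.

Lemma is_ell_dvdp (h : {poly L}) (f : {poly K}) m l :
  is_ell h f m l -> h %| lift_poly L (f ^+ l).
Proof. by rewrite /is_ell; case: ifP => [/eqP-> _|_ []]; rewrite ?dvd1p. Qed.

Lemma dvdp_lift_is_ell (h : {poly L}) (f : {poly K}) m l p :
    irreducible_poly f -> h \is monic -> h %| lift_poly L (f ^+ m) ->
  is_ell h f m l -> h %| lift_poly L p -> f ^+ l %| p.
Proof.
move=> f_irr h_monic h_fm ell h_p.
suff fj_p j : (j <= l)%N -> f ^+ j %| p by apply: fj_p.
elim: j => [|j IHj] lt_jl; first by rewrite expr0 dvd1p.
apply/negPn/negP => fj1_p.
have := dvdp_lift_irr_exp f_irr h_fm h_p (IHj (ltnW lt_jl)) fj1_p.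
move: ell; rewrite /is_ell; case: ifP => [_ l0|h1 [_ _ min_l]].
  by rewrite l0 in lt_jl.
case: j lt_jl {IHj fj1_p} => [|j] lt_jl; last exact/negP/min_l.
by rewrite expr0 /lift_poly rmorph1 dvdp1 size_poly_eq1 eqp_monic ?monic1 ?h1.
Qed.

End Lift.

Section Factorization.
Variables (K : fieldType) (L : fieldExtType K) (s : nat).
Variables (f : 'I_s -> {poly K}) (m l : 'I_s -> nat) (gs : 'I_s -> {poly L}).
Hypotheses (f_monic : forall i, f i \is monic) (f_irr : forall i, irreducible_poly (f i)).
Hypotheses (f_inj : injective f) (gs_monic : forall i, gs i \is monic).
Hypotheses (gs_dvd : forall i, gs i %| lift_poly L (f i ^+ m i)).
Hypothesis ell : forall i, is_ell (gs i) (f i) (m i) (l i).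

Lemma dvdp_lift_prod_is_ell p :
  \prod_i gs i %| lift_poly L p <-> \prod_i f i ^+ l i %| p.
Proof.
split=> [gs_p|F_p].
  apply: dvdp_prod_coprime (index_enum_uniq _) _ _ => [i j _ _ ij|i _].
    apply/coprimep_expl/coprimep_expr/coprimep_irredp_monic => //.
    by apply: contra ij => /eqP/f_inj->.
  apply: dvdp_lift_is_ell (ell i) _ => //.
  by apply: dvdp_trans gs_p; rewrite (bigD1 i) //= dvdp_mulIl.
apply: dvdp_trans (dvdp_prod2 _ (fun i => is_ell_dvdp (ell i))) _.
by rewrite /lift_poly -rmorph_prod dvdp_map.
Qed.

End Factorization.

Section CodeOverBaseField.
Variables (K : fieldType) (L : fieldExtType K) (n : nat).
Variables (M : 'M[K]_n.+1) (v : 'rV[K]_n.+1) (g : {poly L}) (F : {poly K}).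
Hypotheses (cycv : cyclic_vector M v) (F_monic : F \is monic).
Hypotheses (F_dvd_mp : F %| mxminpoly M) (gF : forall p, g %| lift_poly L p <-> F %| p).

Local Notation d := (n.+1 - (size F).-1)%N.
Local Notation C := (cyclic_code M v g).

Lemma size_mulF_leq (Q : {poly K}) : (size Q <= d)%N -> (size (F * Q)%R <= n.+1)%N.
Proof.
move=> sQ; have F_gt0 : (0 < size F)%N by rewrite size_poly_gt0 monic_neq0.
have := dvdp_leq (monic_neq0 (mxminpoly_monic M)) F_dvd_mp.
rewrite size_mxminpoly (degree_mxminpoly_cyclic cycv) => sF.
apply: leq_trans (size_mul_leq _ _) _; move: sQ sF F_gt0; case: (size F) => //= k; lia.
Qed.

Lemma mulF_horner_row_inj (Q1 Q2 : {poly K}) : (size Q1 <= d)%N -> (size Q2 <= d)%N ->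
  horner_row M v (F * Q1) = horner_row M v (F * Q2) -> Q1 = Q2.
Proof.
move=> sQ1 sQ2 eqQ; have : F * (Q1 - Q2) = 0.
  apply: (horner_row_eq0_small cycv); last by rewrite mulrBr linearB /= eqQ subrr.
  by apply: size_mulF_leq; rewrite (leq_trans (size_add _ _)) // size_opp geq_max sQ1.
by move/eqP; rewrite mulf_eq0 (negbTE (monic_neq0 F_monic)) subr_eq0 => /eqP.
Qed.

Lemma cyclic_code_liftP w :
  C (lift_mx L w) <-> exists2 Q : {poly K}, (size Q <= d)%N & w = horner_row M v (F * Q).
Proof.
split=> [/cyclic_codeE[P wP]|[Q sQ ->]]; last first.
  apply/cyclic_codeE; exists (lift_poly L F %/ g * lift_poly L Q).
  by rewrite mulrA divpKC ?(gF F).2 // /lift_poly -rmorphM lift_horner_row.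
have [p sp wE] := horner_row_surj cycv w.
have : mxminpoly (lift_mx L M) %| lift_poly L p - g * P.
  rewrite -(horner_row_eq0 (cyclic_vector_lift L cycv)) linearB /= -lift_horner_row -wE.
  by rewrite wP subrr.
rewrite /lift_mx mxminpoly_map -/(lift_poly L _) => mp_dvd.
have g_p : g %| lift_poly L p.
  rewrite -(subrK (g * P) (lift_poly L p)) dvdp_add ?dvdp_mulIl //.
  exact: dvdp_trans ((gF _).2 F_dvd_mp) mp_dvd.
have F_p := (gF p).1 g_p; exists (p %/ F); last by rewrite wE mulrC divpK.
have [->|Q0] := eqVneq (p %/ F) 0; first by rewrite size_poly0.
have F_gt0 : (0 < size F)%N by rewrite size_poly_gt0 monic_neq0.
move: sp; rewrite -{1}(divpK F_p) size_Mmonic //; move: F_gt0; case: (size F) => //= k; lia.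
Qed.

Definition code_param k (r : 'rV[K]_k) := horner_row M v (F * rVpoly r).

Lemma code_param_is_linear k : linear (@code_param k).
Proof. by move=> a r1 r2; rewrite /code_param !linearP /= mulrDr -scalerAr linearP. Qed.

HB.instance Definition _ k :=
  GRing.isLinear.Build K 'rV[K]_k 'rV[K]_n.+1 _ (@code_param k) (@code_param_is_linear k).

Lemma cyclic_code_lift_vspace : exists U : {vspace 'rV[K]_n.+1},
  (forall w, w \in U <-> C (lift_mx L w)) /\ \dim U = d.
Proof.
set T := linfun (@code_param d); exists (limg T); split=> [w|].
  rewrite cyclic_code_liftP; split=> [/memv_imgP[r _ ->]|[Q sQ ->]].
    by exists (rVpoly r); rewrite ?lfunE ?size_poly.
  have -> : horner_row M v (F * Q) = T (poly_rV Q) by rewrite lfunE /= /code_param poly_rV_K.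
  exact: memv_img (memvf _).
have kerT : lker T == 0%VS.
  apply/lker0P => r1 r2; rewrite !lfunE /= => /mulF_horner_row_inj.
  by rewrite !size_poly => /(_ isT isT) /(can_inj rVpolyK).
rewrite limg_dim_eq ?(eqP kerT) ?capv0 // dimvf dim_matrix; exact: mul1n.
Qed.

Lemma cyclic_code_lift_neq0 : (exists w, C (lift_mx L w) /\ w != 0) <-> (0 < d)%N.
Proof.
split=> [[w [/cyclic_code_liftP[Q sQ ->] w0]]|d_gt0].
  rewrite (leq_trans _ sQ) // size_poly_gt0.
  by apply: contraNneq w0 => ->; rewrite mulr0 linear0.
exists (horner_row M v (F * 1)); split.
  by apply/cyclic_code_liftP; exists 1; rewrite ?size_poly1.
apply: contra_neq (oner_neq0 {poly K}) => F10.
by apply: mulF_horner_row_inj; rewrite ?size_poly1 ?size_poly0 // mulr0 linear0.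
Qed.

End CodeOverBaseField.

Section RankWeight.
Variables (K : fieldType) (L : fieldExtType K).

Lemma rank_weight_gt0 n (c : 'rV[L]_n) : c != 0 -> (0 < rank_weight c)%N.
Proof.
case/rV0Pn=> j cj; rewrite lt0n dimv_eq0; apply: contraNneq cj => V0.
by rewrite -memv0 -V0 memv_span // map_f ?mem_enum.
Qed.

Lemma rank_weight_lift n (w : 'rV[K]_n) : w != 0 -> rank_weight (lift_mx L w) = 1%N.
Proof.
move=> w0; apply/eqP; rewrite eqn_leq rank_weight_gt0 ?andbT ?map_mx_eq0 //.
apply: leq_trans (dimvS (_ : _ <= <[1 : L]>)%VS) _; last by rewrite dim_vline oner_neq0.
apply/span_subvP => _ /mapP[k _ ->]; rewrite mxE.
by apply/vlineP; exists (w ord0 k).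
Qed.

Lemma rank_weight_eq1P n (c : 'rV[L]_n) :
  rank_weight c = 1%N -> exists x w, c = x *: lift_mx L w.
Proof.
rewrite /rank_weight; set V := (<<_>>)%VS => dimV1.
pose x := vpick V; have x0 : x != 0 by rewrite vpick0 -dimv_eq0 dimV1.
have VE : V = <[x]>%VS.
  by apply/eqP; rewrite eq_sym eqEdim -memvE memv_pick dim_vline x0 dimV1.
exists x, (\row_k coord [tuple x] ord0 (c ord0 k)); apply/rowP => k; rewrite !mxE.
have : c ord0 k \in <<[tuple x]>>%VS.
  by rewrite span_seq1 -VE memv_span // map_f ?mem_enum.
by move/coord_span => {1}->; rewrite big_ord1 mulr_algr.
Qed.

Lemma is_M1_1P n (C : 'rV[L]_n -> Prop) : (forall x c, C c -> C (x *: c)) ->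
  is_M1 C 1 <-> exists w, C (lift_mx L w) /\ w != 0.
Proof.
move=> CZ; split=> [[[c [Cc c0 /rank_weight_eq1P[x [w cE]]]] _]|[w [Cw w0]]].
  have x0 : x != 0 by apply: contraNneq c0 => x0; rewrite cE x0 scale0r.
  exists w; split; first by rewrite -(scalerK x0 (lift_mx L w)) -cE; apply: CZ.
  by apply: contraNneq c0 => w0; rewrite cE w0 /lift_mx map_mx0 scaler0.
split=> [|c _ /rank_weight_gt0 //]; exists (lift_mx L w).
by rewrite rank_weight_lift // map_mx_eq0.
Qed.

End RankWeight.

Theorem theorem4 (K : fieldType) (L : fieldExtType K) (n : nat)
    (M : 'M[K]_n.+1) (v : 'rV[K]_n.+1) (s : nat)
    (f : 'I_s -> {poly K}) (m : 'I_s -> nat)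
    (g : {poly L}) (gs : 'I_s -> {poly L}) (l : 'I_s -> nat) :
  (n.+1 <= \dim {:L})%N ->
  cyclic_vector M v ->
  mxminpoly M = \prod_(i < s) f i ^+ m i ->
  (forall i, f i \is monic) ->
  (forall i, irreducible_poly (f i)) ->
  injective f ->
  (forall i, 1 <= m i)%N ->
  g \is monic ->
  g = \prod_(i < s) gs i ->
  (forall i, gs i \is monic) ->
  (forall i, gs i %| lift_poly L (f i ^+ m i)) ->
  (forall i, is_ell (gs i) (f i) (m i) (l i)) ->
  let F := \prod_(i < s) f i ^+ l i in
  let d := (n.+1 - \sum_(i < s) l i * (size (f i)).-1)%N in
  let phi := fun Q : {poly K} => v *m (horner_mx M F)^T *m (horner_mx M Q)^T in
  let C := cyclic_code M v g in
  [/\ (* (1) *)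
      (forall p : {poly K}, g %| lift_poly L p <-> F %| p),
      (* (2) phi : K[x]_{<d} -> C_g \cap K^n is a K-linear bijection *)
      [/\ (forall (a : K) (Q1 Q2 : {poly K}), phi (a *: Q1 + Q2) = a *: phi Q1 + phi Q2),
          (forall Q1 Q2 : {poly K}, (size Q1 <= d)%N -> (size Q2 <= d)%N ->
              phi Q1 = phi Q2 -> Q1 = Q2)
        & (forall w : 'rV[K]_n.+1,
              C (lift_mx L w) <-> exists2 Q : {poly K}, (size Q <= d)%N & w = phi Q)],
      (* (2) dimension of C_g \cap K^n *)
      (exists U : {vspace 'rV[K]_n.+1},
          (forall w, w \in U <-> C (lift_mx L w)) /\
          \dim U = (\sum_(i < s) (m i - l i) * (size (f i)).-1)%N)
    & (* (3) *)
      (exists c, C c /\ c != 0) ->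
      (is_M1 C 1 <-> exists i, (l i <= m i - 1)%N)].
Proof.
move=> _ cycv mpE f_monic f_irr f_inj m_gt0 _ gE gs_monic gs_dvd ell F d phi C.
have l_le_m i : (l i <= m i)%N := is_ell_leq (ell i).
have f0 i : f i != 0 := irredp_neq0 (f_irr i).
have F_monic : F \is monic by apply: monic_prod => i _; apply: monic_exp.
have gF p : g %| lift_poly L p <-> F %| p by rewrite gE; apply: dvdp_lift_prod_is_ell.
have F_dvd_mp : F %| mxminpoly M by rewrite mpE; apply: dvdp_prod2 => i; apply: dvdp_exp2l.
have dE : d = (n.+1 - (size F).-1)%N by rewrite size_prod_exp_pred.
have d_sum : d = (\sum_i (m i - l i) * (size (f i)).-1)%N.
  have := size_mxminpoly M; rewrite (degree_mxminpoly_cyclic cycv) mpE => /(congr1 predn).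
  rewrite size_prod_exp_pred //= => deg_mp; rewrite /d -deg_mp -sumnB => [|i _]; last first.
    by rewrite leq_mul2r l_le_m orbT.
  by apply: eq_bigr => i _; rewrite mulnBl.
have phiE Q : phi Q = horner_row M v (F * Q) by rewrite horner_rowM.
have codeP := cyclic_code_liftP cycv F_monic F_dvd_mp gF.
rewrite {}/C; split=> //.
- split=> [a Q1 Q2|Q1 Q2|w]; rewrite ?phiE ?dE.
  + by rewrite mulrDr -scalerAr linearP.
  + exact: mulF_horner_row_inj.
  + by rewrite codeP; split=> -[Q sQ wE]; exists Q; rewrite // wE phiE.
- by rewrite -d_sum dE; apply: cyclic_code_lift_vspace.
move=> _; rewrite is_M1_1P; last exact: cyclic_codeZ.
rewrite (cyclic_code_lift_neq0 cycv F_monic F_dvd_mp gF) -dE d_sum lt0n sum_nat_eq0 negb_forall.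
have termE i : ((m i - l i) * (size (f i)).-1 != 0)%N = (l i <= m i - 1)%N.
  rewrite muln_eq0 negb_or -lt0n -lt0n subn_gt0 ltn_predRL (f_irr i).1 andbT.
  by case: (m i) (m_gt0 i) => // k _; rewrite subn1.
split=> [/existsP[i]|[i li]]; first by rewrite /= termE; exists i.
by apply/existsP; exists i; rewrite /= termE.
Qed.
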